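(* For $k\geq 3$ and $r\geq 2$, $$M(k;r)\leq \sum_{i=0}^{k-3}(i+1)\,M(k-i;r-1)-\frac{k^2}{2}+\frac{3k}{2}+(k-1)r.$$
   Context: A sequence of positive integers $w_1<\dots<w_n$ is an ascending wave if $w_{i+1}-w_i \geq w_i-w_{i-1}$ for $2\le i\le n-1$. $AW(k;r)$ is the least $N$ such that every $r$-coloring of $\{1,\dots,N\}$ contains a $k$-term monochromatic ascending wave. For $k\ge 2$ and $M\ge AW(k;r)$: for an $r$-coloring $\psi$ of $\{1,\dots,M\}$, $\delta_k(\psi)$ is the minimum of $w_k-w_{k-1}$ over all monochromatic $k$-term ascending waves $(w_1,\dots,w_k)$ under $\psi$, and $\Delta^M(k;r)$ is the maximum of $\delta_k(\psi)$ over all $r$-colorings $\psi$ of $\{1,\dots,M\}$. The integers $M(k;r)$ are defined by $M(k;1)=k$, $M(1;r)=1$, $M(2;r)=r+1$, and for $k\ge3$, $r\ge2$, $M(k;r)=M(k-1;r)+\Delta^{M(k-1;r)}(k-1;r)+M(k;r-1)-1$; one has $M(k;r)\ge AW(k;r)$ so these quantities are defined. *)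

From mathcomp Require Import all_boot all_order all_algebra.
Set Implicit Arguments. Unset Strict Implicit. Unset Printing Implicit Defensive.

(* Colorings of {1,...,N} with r colors: c : {ffun 'I_N -> 'I_r}, where
   the ordinal i : 'I_N stands for the integer i+1.
   A k-term sequence of elements of {1,...,N}: w : {ffun 'I_k -> 'I_N}
   (the term w_{i+1} is the integer (w i)+1). *)

(* n-th term (0-indexed) of w as a natural number (shifted by -1). *)
Definition wv (k N : nat) (w : {ffun 'I_k -> 'I_N}) (n : nat) : nat :=
  if insub n is Some i then nat_of_ord (w i) else 0.

Definition asc_wave (k N : nat) (w : {ffun 'I_k -> 'I_N}) : bool :=
  [forall i : 'I_k, (i.+1 < k) ==> (wv w i < wv w i.+1)] &&
  [forall i : 'I_k, (i.+2 < k) ==>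
      (wv w i.+1 - wv w i <= wv w i.+2 - wv w i.+1)].

Definition monochromatic (k N r : nat) (c : {ffun 'I_N -> 'I_r})
  (w : {ffun 'I_k -> 'I_N}) : bool :=
  [forall i : 'I_k, forall j : 'I_k, c (w i) == c (w j)].

(* delta_k(c) : minimum of w_k - w_{k-1} over monochromatic k-term ascending
   waves.  The default value N of the min is never reached when such a wave
   exists (all these differences are < N). *)
Definition delta (k N r : nat) (c : {ffun 'I_N -> 'I_r}) : nat :=
  \big[minn/N]_(w : {ffun 'I_k -> 'I_N} | asc_wave w && monochromatic c w)
     (wv w k.-1 - wv w k.-2).

Definition Delta (N k r : nat) : nat :=
  \max_(c : {ffun 'I_N -> 'I_r}) delta k c.

(* M(k;r) as a function Mfun r k. M(k;1)=k, M(1;r)=1, M(2;r)=r+1,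
   M(k;r) = M(k-1;r) + Delta^{M(k-1;r)}(k-1;r) + M(k;r-1) - 1 for k>=3, r>=2.
   Values at k = 0 or r = 0 are unused junk (0). *)
Fixpoint Mfun (r : nat) : nat -> nat :=
  match r with
  | 0 => fun _ => 0
  | 1 => fun k => k
  | r'.+1 => fix g (k : nat) : nat :=
      match k with
      | 0 => 0
      | 1 => 1
      | 2 => r'.+2
      | k'.+1 => g k' + Delta (g k') k' r'.+1 + Mfun r' k'.+1 - 1
      end
  end.

Definition M (k r : nat) : nat := Mfun r k.

From mathcomp Require Import all_boot all_order all_algebra zify lra.
Set Implicit Arguments. Unset Strict Implicit. Unset Printing Implicit Defensive.
Import Order.TTheory GRing.Theory Num.Theory.

(** Write a := M(k;r), D := Delta^a(k;r) and b := M(k+1;r-1), and take an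
  r-coloring of {1, ..., a+D+b-1}.  On {1, ..., a} it has a monochromatic
  k-term wave w whose last gap is at most D.  If one of the b integers
  starting at w_k + (w_k - w_{k-1}) has the colour of w, appending it to w
  gives a monochromatic (k+1)-term wave; otherwise these b integers use only
  r-1 colours and so contain one.  Either way the new wave lies below
  M(k+1;r) = a+D+b-1 and its last gap is at most D+b-1.  By induction this
  shows that the waves exist at all, and it bounds
  Delta^{M(k+1;r)}(k+1;r) <= Delta^{M(k;r)}(k;r) + M(k+1;r-1) - 1, while
  Delta^{M(2;r)}(2;r) <= r by pigeonhole.  Summing these bounds inside the
  defining recurrence of M gives the inequality. *)

Definition wave (k : nat) (f : nat -> nat) : Prop :=
  (forall i, i.+1 < k -> f i < f i.+1) /\
  (forall i, i.+2 < k -> f i.+1 - f i <= f i.+2 - f i.+1).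

Definition last_gap (k : nat) (f : nat -> nat) : nat := f k.-1 - f k.-2.

Definition forces_wave (N k r B : nat) : Prop :=
  forall col : nat -> nat, (forall x, x < N -> col x < r) ->
  exists f, [/\ wave k f, forall i, i < k -> f i < N,
                forall i, i < k -> col (f i) = col (f 0) & last_gap k f <= B].

Lemma wave_shift k s f : wave k f -> wave k (fun i => s + f i).
Proof.
by case=> f_lt f_gap; split=> i lt_ik; rewrite ?ltn_add2l ?subnDl; [apply: f_lt | apply: f_gap].
Qed.

Lemma wave_extend k f y : 1 < k -> wave k f ->
  wave k.+1 (fun i => if i < k then f i else f k.-1 + last_gap k f + y).
Proof.
case: k => [|[|n]] // _ [f_lt f_gap]; rewrite /last_gap /=.
have lt_n := f_lt n (ltnSn _).
split=> i lt_i.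
- have [lt_ik|ge_ik] := ltnP i.+1 n.+2; first by rewrite (ltnW lt_ik) f_lt.
  by rewrite (_ : i = n.+1) ?ltnSn; lia.
- have [lt_ik|ge_ik] := ltnP i.+2 n.+2.
    by rewrite (ltnW lt_ik) (ltnW (ltnW lt_ik)) f_gap.
  by rewrite (_ : i = n) ?ltnSn ?(ltnW (ltnSn n.+1)); lia.
Qed.

Definition natcol N r (c : {ffun 'I_N -> 'I_r}) (x : nat) : nat :=
  if insub x is Some i then c i : nat else 0.

Lemma natcolE N r (c : {ffun 'I_N -> 'I_r}) (i : 'I_N) : natcol c i = c i.
Proof. by rewrite /natcol valK. Qed.

Lemma wvE k N (w : {ffun 'I_k -> 'I_N}) n (lt_nk : n < k) :
  wv w n = w (Ordinal lt_nk).
Proof. by rewrite /wv insubT. Qed.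

Lemma wv_le k N (w : {ffun 'I_k -> 'I_N}) n : wv w n <= N.
Proof. by rewrite /wv; case: insub => [i|] //; apply: ltnW. Qed.

Lemma asc_wave_of_wave k N r (c : {ffun 'I_N -> 'I_r}) f :
  wave k f -> (forall i, i < k -> f i < N) ->
  (forall i, i < k -> natcol c (f i) = natcol c (f 0)) ->
  exists2 w : {ffun 'I_k -> 'I_N}, asc_wave w && monochromatic c w &
    forall n, n < k -> wv w n = f n.
Proof.
move=> [f_lt f_gap] f_ltN f_col.
pose w := [ffun i : 'I_k => Ordinal (f_ltN i (ltn_ord i))].
have wvw n : n < k -> wv w n = f n by move=> lt_nk; rewrite (wvE w lt_nk) ffunE.
exists w => //; apply/andP; split; first (apply/andP; split).
- apply/forallP => i; apply/implyP => lt_i.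
  by rewrite !wvw ?(ltnW lt_i) ?f_lt.
- apply/forallP => i; apply/implyP => lt_i.
  by rewrite !wvw ?(ltnW lt_i) ?(ltnW (ltnW lt_i)) ?f_gap.
- apply/forallP => i; apply/forallP => j; apply/eqP.
  have k_gt0 : 0 < k by apply: leq_ltn_trans (ltn_ord i).
  by rewrite !ffunE; apply: val_inj; rewrite /= -!natcolE /= !f_col.
Qed.

Lemma wave_of_asc_wave k N r (c : {ffun 'I_N -> 'I_r}) (w : {ffun 'I_k -> 'I_N}) :
  0 < k -> asc_wave w && monochromatic c w ->
  [/\ wave k (wv w), forall i, i < k -> wv w i < N &
      forall i, i < k -> natcol c (wv w i) = natcol c (wv w 0)].
Proof.
move=> k_gt0 /andP [/andP [/forallP w_lt /forallP w_gap] /forallP w_col].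
split.
- split=> i lt_i.
  + exact: implyP (w_lt (Ordinal (ltnW lt_i))) lt_i.
  + exact: implyP (w_gap (Ordinal (ltnW (ltnW lt_i)))) lt_i.
- by move=> i lt_ik; rewrite (wvE w lt_ik).
- move=> i lt_ik; rewrite (wvE w lt_ik) (wvE w k_gt0) !natcolE.
  by rewrite (eqP (forallP (w_col (Ordinal lt_ik)) (Ordinal k_gt0))).
Qed.

Lemma delta_le_gap k N r (c : {ffun 'I_N -> 'I_r}) (w : {ffun 'I_k -> 'I_N}) :
  asc_wave w && monochromatic c w -> delta k c <= wv w k.-1 - wv w k.-2.
Proof. by move=> wP; rewrite /delta; apply: (bigmin_le_cond (T := nat)). Qed.

Lemma delta_eq_gap k N r (c : {ffun 'I_N -> 'I_r}) (w0 : {ffun 'I_k -> 'I_N}) :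
  asc_wave w0 && monochromatic c w0 ->
  exists2 w : {ffun 'I_k -> 'I_N}, asc_wave w && monochromatic c w &
    delta k c = wv w k.-1 - wv w k.-2.
Proof.
move=> w0P; rewrite /delta.
have [w wP ->] := eq_bigmin (T := nat) (x := N) _
  (fun w => asc_wave w && monochromatic c w) (fun w => wv w k.-1 - wv w k.-2) w0P
  (fun w _ => leq_trans (leq_subr _ _) (wv_le w k.-1)).
by exists w.
Qed.

Lemma Delta_le N k r B : 1 < k -> forces_wave N k r B -> Delta N k r <= B.
Proof.
move=> k_gt1 G; apply/bigmax_leqP => c _.
have natcol_lt x : x < N -> natcol c x < r.
  by move=> lt_xN; rewrite -[x]/(Ordinal lt_xN : nat) natcolE.
have [f [fw f_ltN f_col f_gap]] := G _ natcol_lt.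
have [w wP wv_f] := asc_wave_of_wave fw f_ltN f_col.
by apply: leq_trans (delta_le_gap wP) _; rewrite !wv_f //; lia.
Qed.

Lemma forces_wave_Delta N k r : 1 < k ->
  forces_wave N k r N -> forces_wave N k r (Delta N k r).
Proof.
move=> k_gt1 G col col_lt; have k_gt0 := ltnW k_gt1.
pose c := [ffun i : 'I_N => Ordinal (col_lt i (ltn_ord i))].
have natcol_c x : x < N -> natcol c x = col x.
  by move=> lt_xN; rewrite -[x]/(Ordinal lt_xN : nat) natcolE ffunE.
have [f [fw f_ltN f_col _]] := G col col_lt.
have [w0 w0P _] : exists2 w0 : {ffun 'I_k -> 'I_N},
    asc_wave w0 && monochromatic c w0 & forall n, n < k -> wv w0 n = f n.
  by apply: asc_wave_of_wave => // i lt_ik; rewrite !natcol_c ?f_ltN ?f_col.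
have [w wP delta_w] := delta_eq_gap w0P.
have [ww w_ltN w_col] := wave_of_asc_wave k_gt0 wP.
exists (wv w); split => //.
- by move=> i lt_ik; rewrite -!natcol_c ?w_ltN ?w_col.
- by rewrite /last_gap -delta_w; apply: leq_bigmax.
Qed.

Lemma forces_wave_weaken N k r B B' :
  B <= B' -> forces_wave N k r B -> forces_wave N k r B'.
Proof.
move=> le_BB' G col col_lt; have [f [fw f_ltN f_col f_gap]] := G col col_lt.
by exists f; split=> //; apply: leq_trans le_BB'.
Qed.

Lemma forces_wave_mono_color k : 0 < k -> forces_wave k k 1 k.
Proof.
move=> k_gt0 col col_lt; exists id; split=> [|//|i lt_ik|] /=.
- by split=> i _ /=; lia.
- by have := col_lt i lt_ik; have := col_lt 0 k_gt0; lia.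
- by rewrite /last_gap; lia.
Qed.

Lemma forces_wave_pair r : forces_wave r.+1 2 r r.
Proof.
move=> col col_lt.
pose h (i : 'I_r.+1) : 'I_r := Ordinal (col_lt i (ltn_ord i)).
have /injectivePn [x [y neq_xy hxy]] : ~~ injectiveb h.
  by apply/injectiveP => /leq_card; rewrite !card_ord ltnn.
wlog lt_xy : x y neq_xy hxy / x < y.
  move=> W; have [lt_xy|lt_yx|/val_inj eq_xy] := ltngtP x y.
  - exact: W lt_xy.
  - by apply: (W y x); rewrite // eq_sym.
  - by rewrite eq_xy eqxx in neq_xy.
exists (fun i => if i is 0 then x : nat else y); split=> //=.
- by split=> [[|i]|i].
- by case=> [|[|i]] //= _; rewrite ltn_ord.
- by case=> [|[|i]] //= _; have /= := congr1 val hxy.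
- by rewrite (leq_trans (leq_subr _ _)) // -ltnS.
Qed.

Definition drop_color (c0 v : nat) : nat := if v < c0 then v else v.-1.

Lemma drop_color_inj c0 u v : u != c0 -> v != c0 ->
  drop_color c0 u = drop_color c0 v -> u = v.
Proof. by rewrite /drop_color => ? ?; case: (ltnP u c0) => ?; case: (ltnP v c0) => ?; lia. Qed.

Lemma drop_color_lt c0 r v : v != c0 -> v < r -> c0 < r -> drop_color c0 v < r.-1.
Proof. by rewrite /drop_color => ? ? ?; case: (ltnP v c0) => ?; lia. Qed.

Lemma forces_wave_step k r a D b : 1 < k -> 0 < b ->
  forces_wave a k r D -> forces_wave b k.+1 r.-1 b ->
  forces_wave (a + D + b - 1) k.+1 r (D + b - 1).
Proof.
move=> k_gt1 b_gt0 Ga Gb col col_lt; have k_gt0 := ltnW k_gt1.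
have col_lt_a x : x < a -> col x < r by move=> lt_xa; apply: col_lt; lia.
have [f [fw f_ltN f_col f_gap]] := Ga col col_lt_a.
pose s := f k.-1 + last_gap k f.
have s_lt : s < a + D.
  by have := f_ltN k.-1; rewrite ltn_predL /s => /(_ k_gt0); lia.
have [/existsP [y /eqP col_y] | /existsPn no_y] :=
  boolP [exists y : 'I_b, col (s + y) == col (f 0)].
- exists (fun i => if i < k then f i else s + y); split.
  + exact: wave_extend.
  + by move=> i lt_i; case: ifP => [/f_ltN|_]; have := ltn_ord y; lia.
  + by move=> i lt_i; rewrite k_gt0; case: ifP => // /f_col.
  + rewrite /last_gap /= ltnn ltn_predL k_gt0 /s; have := ltn_ord y; lia.
- pose col' y := drop_color (col (f 0)) (col (s + y)).
  have col0_lt : col (f 0) < r := col_lt_a _ (f_ltN 0 k_gt0).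
  have neq_col0 y : y < b -> col (s + y) != col (f 0).
    by move=> lt_yb; apply: (no_y (Ordinal lt_yb)).
  have col'_lt y : y < b -> col' y < r.-1.
    by move=> lt_yb; apply: drop_color_lt col0_lt; [exact: neq_col0 | apply: col_lt; lia].
  have [g [gw g_ltb g_col g_gap]] := Gb col' col'_lt.
  exists (fun i => s + g i); split.
  + exact: wave_shift.
  + by move=> i /g_ltb; lia.
  + move=> i lt_i; apply: drop_color_inj (g_col _ lt_i);
      exact: neq_col0 (g_ltb _ _).
  + by rewrite /last_gap /= subnDl; have := g_ltb k (ltnSn k); lia.
Qed.

Lemma M_2 r : 0 < r -> M 2 r = r.+1.
Proof. by case: r => [|[|r]]. Qed.

Lemma M_succ k r : 1 < k -> 1 < r ->
  M k.+1 r = M k r + Delta (M k r) k r + M k.+1 r.-1 - 1.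
Proof. by case: r => [|[|r]] //; case: k => [|[|k]]. Qed.

Lemma forces_wave_gt0 N k r B : 0 < k -> 0 < r -> forces_wave N k r B -> 0 < N.
Proof.
move=> k_gt0 r_gt0 G; have [f [_ f_ltN _ _]] := G (fun=> 0) (fun _ _ => r_gt0).
exact: leq_ltn_trans (f_ltN 0 k_gt0).
Qed.

Lemma M_forces_wave k r : 1 < k -> 0 < r -> forces_wave (M k r) k r (M k r).
Proof.
elim: r k => // r IHr k k_gt1 _; have [->|r_gt0] := posnP r.
  exact: forces_wave_mono_color (ltnW k_gt1).
elim: k k_gt1 => // k IHk; rewrite ltnS leq_eqVlt => /predU1P [<-|k_gt1].
  by rewrite M_2 //; apply: forces_wave_weaken (leqnSn _) (@forces_wave_pair r.+1).
have Gb := IHr k.+1 (leqW k_gt1) r_gt0.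
have b_gt0 := forces_wave_gt0 (ltn0Sn k) r_gt0 Gb.
have Ga := forces_wave_Delta k_gt1 (IHk k_gt1).
rewrite M_succ // -pred_Sn.
by apply: forces_wave_weaken _ (forces_wave_step k_gt1 b_gt0 Ga Gb); lia.
Qed.

Lemma M_gt0 k r : 1 < k -> 0 < r -> 0 < M k r.
Proof.
by move=> k_gt1 r_gt0; apply: forces_wave_gt0 (ltnW k_gt1) r_gt0 (M_forces_wave k_gt1 r_gt0).
Qed.

Lemma Delta_M_2 r : 0 < r -> Delta (M 2 r) 2 r <= r.
Proof. by move=> r_gt0; rewrite M_2 //; apply: Delta_le _ (@forces_wave_pair r). Qed.

Lemma Delta_M_succ k r : 1 < k -> 1 < r ->
  Delta (M k.+1 r) k.+1 r <= Delta (M k r) k r + M k.+1 r.-1 - 1.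
Proof.
move=> k_gt1 r_gt1; have r_gt0 := ltnW r_gt1; have r'_gt0 : 0 < r.-1 by lia.
have Ga := forces_wave_Delta k_gt1 (M_forces_wave k_gt1 r_gt0).
have Gb := M_forces_wave (leqW k_gt1) r'_gt0.
rewrite M_succ //; apply: Delta_le (leqW k_gt1) (forces_wave_step k_gt1 _ Ga Gb).
exact: M_gt0 (leqW k_gt1) r'_gt0.
Qed.

Local Open Scope ring_scope.

Lemma sum_tail_rev (R : nmodType) (b : nat -> R) n :
  \sum_(0 <= i < n) b (n.+2 - i)%N = \sum_(3 <= j < n.+3) b j.
Proof.
rewrite big_nat_rev (big_addn 0 n.+3 3) (_ : n.+3 - 3 = n)%N ?subSS ?subn0 //.
by apply: eq_big_nat => i /andP[_ hi]; congr b; lia.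
Qed.

Lemma weighted_sum_succ (R : pzSemiRingType) (b : nat -> R) k : (1 < k)%N ->
  \sum_(0 <= i < k.+1 - 2) i.+1%:R * b (k.+1 - i)%N =
  \sum_(0 <= i < k - 2) i.+1%:R * b (k - i)%N + \sum_(3 <= j < k.+2) b j.
Proof.
case: k => [|[|n]] // _; rewrite !subSS !subn0 -sum_tail_rev !big_nat_recl //.
rewrite subn0 mul1r addrCA -big_split; congr (_ + _).
by apply: eq_bigr => i _; rewrite subSS mulrSr mulrDl mul1r.
Qed.

Section WaveRecurrence.
Variables (R : realFieldType) (r : R) (a b D : nat -> R).
Hypothesis a2 : a 2 = r + 1.
Hypothesis D2 : D 2 <= r.
Hypothesis a_rec : forall k, (1 < k)%N -> a k.+1 = a k + D k + b k.+1 - 1.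
Hypothesis D_rec : forall k, (1 < k)%N -> D k.+1 <= D k + b k.+1 - 1.

Lemma D_le_sum k : (1 < k)%N -> D k <= r + \sum_(3 <= j < k.+1) (b j - 1).
Proof.
elim: k => [|k IH] // hk; have [k_lt2 | k_ge2] := ltnP k 2.
  by rewrite (_ : k = 1%N) ?big_geq ?addr0 //; lia.
rewrite big_nat_recr /=; last lia.
have := D_rec k_ge2; have := IH k_ge2; lra.
Qed.

Lemma a_le_weighted_sum k : (1 < k)%N ->
  a k <= \sum_(0 <= i < k - 2) i.+1%:R * b (k - i)%N
         - k%:R ^+ 2 / 2 + 3 * k%:R / 2 + (k%:R - 1) * r.
Proof.
case: k => [|[|n]] // _; elim: n => [|n IH].
  by rewrite big_geq // a2; lra.
have n2 : (1 < n.+2)%N by [].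
rewrite a_rec // weighted_sum_succ // big_nat_recr //= [n.+3%:R]mulrSr.
have := D_le_sum n2; rewrite sumrB sumr_const_nat.
move: IH; rewrite !subSS !subn0 -[n.+2]addn2 natrD.
lra.
Qed.
End WaveRecurrence.

Theorem lemma1p3 (k r : nat) : (3 <= k)%N -> (2 <= r)%N ->
  (M k r)%:R <= (\sum_(0 <= i < k - 2) (i.+1)%:R * (M (k - i) r.-1)%:R
                   - (k ^ 2)%:R / 2 + (3 * k)%:R / 2 + ((k - 1) * r)%:R : rat).
Proof.
move=> k_ge3 r_gt1; have r_gt0 := ltnW r_gt1.
have b_gt0 j : (1 < j)%N -> (0 < M j r.-1)%N by move=> j_gt1; apply: M_gt0; lia.
rewrite natrX !natrM natrB; last lia.
apply: (a_le_weighted_sum (r := r%:R) (a := fun j => (M j r)%:R) (b := fun j => (M j r.-1)%:R)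
  (D := fun j => (Delta (M j r) j r)%:R)) => //.
- by rewrite M_2 // mulrSr.
- by rewrite ler_nat Delta_M_2.
- move=> j j_gt1; rewrite M_succ // natrB ?natrD //.
  by apply: leq_trans (leq_addl _ _); apply: b_gt0; lia.
- move=> j j_gt1; rewrite -natrD -[X in _ - X]/(1%:R) -natrB ?ler_nat ?Delta_M_succ //.
  by apply: leq_trans (leq_addl _ _); apply: b_gt0; lia.
- lia.
Qed.
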